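(* Let $E$ be a finite non-abelian $p$-group of class $2$ with cyclic centre, and let $E_n,Z_n,F_n,K_n,L_n,J_n,\alpha_n$ ($n\ge0$) and the homomorphisms $\psi_n:J_n/L_n\to J_{n-1}/L_{n-1}$ ($n\ge1$) be as follows: $E_n=E^{p^n}$, $Z_n=Z(E_n)$, $F_n=\{(x^{(i)})\in Z_n:\prod_{i=1}^{p^n}x^{(i)}=1\}$, $K_n=E_n/F_n$, $L_n=Z_n/F_n$, $J_n=K_n\rtimes\langle\alpha_n\rangle$ with $\alpha_n$ of order $p^n$ cyclically shifting coordinates; $\psi_n$ is induced on $K_n/L_n\cong E_n/Z_n$ by $x\mapsto\big(\prod_{r\equiv i\ (\mathrm{mod}\ p^{n-1})}x^{(r)}\big)_{i}$ (increasing order) and sends $\alpha_n\mapsto\alpha_{n-1}$. Let $$K=\{(k_n)\in\textstyle\prod_{n\ge0}K_n:\psi_n(k_nL_n)=k_{n-1}L_{n-1}\ \forall n\ge1\},\quad L=\prod_{n\ge0}L_n,$$ let $\mathcal U$ be a non-principal ultrafilter on the index set, $D=\{(k_n)\in L:\{n:k_n\ne1\}\notin\mathcal U\}$, $H=K/D$ and $Z=L/D$. Then $Z\cong Z(E)$, and $H$ is monolithic with $Z(H)=Z$.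
   Context: A group is monolithic if the intersection of all its nontrivial normal subgroups is nontrivial. A non-principal ultrafilter is a maximal filter (family of nonempty subsets closed under finite intersections and supersets) not consisting of all supersets of a fixed set. *)

From HB Require Import structures.
From mathcomp Require Import all_boot all_algebra all_fingroup all_solvable.
From mathcomp Require Import pgroup center nilpotent cyclic.

Set Implicit Arguments.
Unset Strict Implicit.
Unset Printing Implicit Defensive.

(* Prop-valued subsets and a minimal vocabulary for (possibly infinite)  *)
(* groups given as a subset G of a carrier type with mul / inv / unit.  *)

Definition pset (T : Type) := T -> Prop.

(* setwise product and inverse (used for quotient groups = cosets) *)
Definition smul (T : Type) (mul : T -> T -> T) (A B : pset T) : pset T :=
  fun z => exists a b, A a /\ B b /\ z = mul a b.
Definition sinv (T : Type) (inv : T -> T) (A : pset T) : pset T :=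
  fun z => exists a, A a /\ z = inv a.

Section AbstractGroup.
Variables (T : Type) (G : pset T) (mul : T -> T -> T) (inv : T -> T) (e : T).

Definition is_subgroup (N : pset T) : Prop :=
  [/\ forall x, N x -> G x, N e,
      forall x y, N x -> N y -> N (mul x y) &
      forall x, N x -> N (inv x)].

Definition is_normal_subgroup (N : pset T) : Prop :=
  is_subgroup N /\ forall g x, G g -> N x -> N (mul (mul (inv g) x) g).

Definition nontrivial_sub (N : pset T) : Prop := exists x, N x /\ x <> e.

(* the intersection of all nontrivial normal subgroups is nontrivial *)
Definition monolithic : Prop :=
  exists h, [/\ G h, h <> e &
    forall N, is_normal_subgroup N -> nontrivial_sub N -> N h].

Definition gcenter : pset T :=
  fun z => G z /\ forall g, G g -> mul z g = mul g z.

End AbstractGroup.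

Definition isomorphic_to_fin (T : Type) (A : pset T) (mul : T -> T -> T)
    (gT : finGroupType) (B : {set gT}) : Prop :=
  exists f : T -> gT,
    [/\ forall x, A x -> f x \in B,
        forall x y, A x -> A y -> f x = f y -> x = y,
        forall b, b \in B -> exists x, A x /\ f x = b &
        forall x y, A x -> A y -> f (mul x y) = (f x * f y)%g].

Definition is_filter (F : pset (pset nat)) : Prop :=
  [/\ forall A, F A -> exists n, A n,
      forall A B, F A -> F B -> F (fun n => A n /\ B n) &
      forall A B, F A -> (forall n, A n -> B n) -> F B].

Definition is_ultrafilter (U : pset (pset nat)) : Prop :=
  is_filter U /\ forall V, is_filter V -> (forall A, U A -> V A) -> V = U.

Definition nonprincipal (U : pset (pset nat)) : Prop :=
  ~ exists A0 : pset nat, U = (fun B => forall n, A0 n -> B n).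

(* E_n = E^(p^n) : tuples indexed by 'I_(p^n) (coordinates 0..p^n-1).  *)

Section Construction.
Variables (gT : finGroupType) (E : {set gT}) (p : nat).

Definition tup (n : nat) := {ffun 'I_(p ^ n) -> gT}.

Definition tmul n (s t : tup n) : tup n := [ffun i => (s i * t i)%g].
Definition tinv n (s : tup n) : tup n := [ffun i => (s i)^-1%g].
Definition tone n : tup n := [ffun => 1%g].

Definition inE_n n (t : tup n) : Prop := forall i, t i \in E.
Definition inZ_n n (t : tup n) : Prop :=
  inE_n t /\ forall u, inE_n u -> tmul t u = tmul u t.
Definition inF_n n (t : tup n) : Prop :=
  inZ_n t /\ (\prod_(i < p ^ n) t i)%g = 1%g.

Definition cosF n (t : tup n) : pset (tup n) :=
  fun u => exists f, inF_n f /\ u = tmul t f.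
Definition inK_n n (k : pset (tup n)) : Prop :=
  exists t, inE_n t /\ k = cosF t.
Definition inL_n n (k : pset (tup n)) : Prop :=
  exists t, inZ_n t /\ k = cosF t.

Definition psi_rep n (t : tup n.+1) : tup n :=
  [ffun i : 'I_(p ^ n) => (\prod_(r < p ^ n.+1 | r %% p ^ n == i) t r)%g].

Definition seqT := forall n : nat, pset (tup n).

Definition xmul (x y : seqT) : seqT := fun n => smul (@tmul n) (x n) (y n).
Definition xinv (x : seqT) : seqT := fun n => sinv (@tinv n) (x n).
Definition xone : seqT := fun n => cosF (tone n).

(* psi_{n+1}(k_{n+1} L_{n+1}) = k_n L_n, computed through
   K_n/L_n ~= E_n/Z_n on representatives *)
Definition compatible (x : seqT) : Prop :=
  forall n (t : tup n.+1) (s : tup n), x n.+1 t -> x n s ->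
    inZ_n (tmul (tinv s) (psi_rep t)).

Definition inK (x : seqT) : Prop := (forall n, inK_n (x n)) /\ compatible x.
Definition inL (x : seqT) : Prop := forall n, inL_n (x n).

Variable U : pset (pset nat).

Definition inD (x : seqT) : Prop :=
  inL x /\ ~ U (fun n => x n <> cosF (tone n)).

Definition cosD (x : seqT) : pset seqT :=
  fun y => exists d, inD d /\ y = xmul x d.

Definition Hcar : pset (pset seqT) := fun C => exists x, inK x /\ C = cosD x.
Definition Hmul : pset seqT -> pset seqT -> pset seqT := smul xmul.
Definition Hinv : pset seqT -> pset seqT := sinv xinv.
Definition Hone : pset seqT := cosD xone.

Definition Zcar : pset (pset seqT) := fun C => exists x, inL x /\ C = cosD x.

End Construction.

From mathcomp Require Import all_boot all_algebra all_fingroup all_solvable.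
From mathcomp Require Import pgroup center nilpotent cyclic.
From Stdlib Require Import Classical ClassicalEpsilon FunctionalExtensionality PropExtensionality.

(* An element of K is represented by a sequence r of tuples r_n in E_n whose
   coordinates, read modulo Z(E), are compatible under psi; elements of L are
   represented by central tuples, and D consists of those whose coordinate
   products are trivial on a U-large set of levels.  As Z(E) is finite, the
   U-limit of the coordinate products identifies Z = L/D with Z(E).
   If r_n0 has a noncentral coordinate, compatibility yields a noncentral
   coordinate of r_n lying over it at every level n >= n0.  Putting a fixed y
   at these coordinates and 1 elsewhere gives an element of K which, for y not
   commuting with the U-limit class of these coordinates modulo Z(E), does not
   commute with r; hence Z(H) = Z.  A nontrivial normal subgroup of H therefore
   contains a nontrivial element of Z (the element itself or a commutator, which
   is central because E has class 2), hence the unique subgroup of order p of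
   the cyclic p-group Z. *)

Set Implicit Arguments.
Unset Strict Implicit.
Unset Printing Implicit Defensive.

Lemma pset_ext (T : Type) (A B : pset T) : (forall x, A x <-> B x) -> A = B.
Proof.
move=> AB; apply: functional_extensionality => x.
exact: propositional_extensionality.
Qed.

(** * Ultrafilters on [nat] *)

Section Ultrafilter.
Variable U : pset (pset nat).
Hypothesis hU : is_ultrafilter U.

Lemma uf_ex A : U A -> exists n, A n.
Proof. by case: hU => -[h _ _] _; apply: h. Qed.

Lemma uf_and A B : U A -> U B -> U (fun n => A n /\ B n).
Proof. by case: hU => -[_ h _] _; apply: h. Qed.

Lemma uf_sub A B : U A -> (forall n, A n -> B n) -> U B.
Proof. by case: hU => -[_ _ h] _; apply: h. Qed.

Lemma uf_max V : is_filter V -> (forall A, U A -> V A) -> V = U.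
Proof. by case: hU => _ h; apply: h. Qed.

Lemma uf_True : U (fun _ => True).
Proof.
apply: NNPP => nUT.
have filter_at0 : is_filter (fun B : pset nat => B 0).
  by split=> [A A0|A B|A B A0 /(_ 0 A0)]; [exists 0 | split |].
have at0_eq : (fun B : pset nat => B 0) = U.
  by apply: uf_max filter_at0 _ => A UA; case: nUT; apply: uf_sub UA _.
by apply: nUT; rewrite -at0_eq.
Qed.

(* If no member of [U] lies inside [A], then [U] together with the complement
   of [A] generates a filter, which by maximality is [U] itself. *)
Lemma uf_or_not A : U A \/ U (fun n => ~ A n).
Proof.
case: (classic (exists C, U C /\ forall n, C n -> A n)) => [[C [UC CA]]|noC].
  by left; apply: uf_sub UC CA.
right.
pose V := fun B : pset nat => exists C, U C /\ forall n, C n /\ ~ A n -> B n.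
have filterV : is_filter V.
  split.
  - move=> B [C [UC CB]]; apply: NNPP => nB; apply: noC; exists C; split=> // n Cn.
    by apply: NNPP => nAn; apply: nB; exists n; apply: CB.
  - move=> B1 B2 [C1 [UC1 CB1]] [C2 [UC2 CB2]]; exists (fun n => C1 n /\ C2 n).
    split; first exact: uf_and.
    by move=> n [[c1 c2] nA]; split; [apply: CB1 | apply: CB2].
  - by move=> B1 B2 [C [UC CB]] B12; exists C; split=> // n /CB /B12.
have <- : V = U by apply: uf_max filterV _ => B UB; exists B; split=> // n [].
by exists (fun _ => True); split; [exact: uf_True | move=> n []].
Qed.

Lemma uf_or A B : U (fun n => A n \/ B n) -> U A \/ U B.
Proof.
move=> UAB; case: (uf_or_not A) => [|UnA]; first by left.
case: (uf_or_not B) => [|UnB]; first by right.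
by have [n [[] ? []]] := uf_ex (uf_and UAB (uf_and UnA UnB)).
Qed.

Lemma uf_const (T : finType) (g : nat -> T) : exists v, U (fun n => g n = v).
Proof.
apply: NNPP => noconst.
have avoid v : U (fun n => g n <> v).
  by case: (uf_or_not (fun n => g n = v)) => // Uv; case: noconst; exists v.
have avoid_seq (s : seq T) : U (fun n => forall v, v \in s -> g n <> v).
  elim: s => [|v s IHs]; first by apply: uf_sub uf_True _ => n _ v.
  apply: uf_sub (uf_and (avoid v) IHs) _ => n [gnv gns] w.
  by rewrite inE => /orP[/eqP->|/gns].
have [n gn] := uf_ex (avoid_seq (enum T)).
exact: (gn (g n)) (mem_enum _ _) erefl.
Qed.

Lemma uf_const_unique (T : Type) (g : nat -> T) v w :
  U (fun n => g n = v) -> U (fun n => g n = w) -> v = w.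
Proof. by move=> Uv Uw; have [n [<- <-]] := uf_ex (uf_and Uv Uw). Qed.

Hypothesis U_nonprincipal : nonprincipal U.

Lemma uf_not_single n : ~ U (fun m => m = n).
Proof.
move=> Un; apply: U_nonprincipal; exists (fun m => m = n).
have filter_n : is_filter (fun B : pset nat => forall m, m = n -> B m).
  split=> [A An|A B An Bn m mn|A B An AB m mn]; first by exists n; apply: An.
    by split; [apply: An | apply: Bn].
  by apply/AB/An.
symmetry; apply: uf_max filter_n _ => B UB m ->.
by have [k [Bk <-]] := uf_ex (uf_and UB Un).
Qed.

Lemma uf_ge n0 : U (fun n => n0 <= n).
Proof.
case: (uf_or_not (fun n => n0 <= n)) => // Ult; exfalso.
have {Ult} : U (fun n => n < n0) by apply: uf_sub Ult _ => n; rewrite ltnNge => /negP.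
elim: n0 => [|k IHk] Ult; first by have [n] := uf_ex Ult.
have : U (fun n => n < k \/ n = k).
  by apply: uf_sub Ult _ => n; rewrite ltnS leq_eqVlt => /orP[/eqP|]; [right|left].
by case/uf_or=> [/IHk|/uf_not_single].
Qed.

End Ultrafilter.

(** * Quotients by a central subgroup *)

Definition pcoset (T : Type) (N : pset T) (mul : T -> T -> T) (x : T) : pset T :=
  fun y => exists f, N f /\ y = mul x f.

Record central_subgroup (T : Type) (G N : pset T)
    (mul : T -> T -> T) (inv : T -> T) (e : T) : Prop := CentralSubgroup {
  cs_mulG : forall x y, G x -> G y -> G (mul x y);
  cs_invG : forall x, G x -> G (inv x);
  cs_oneG : G e;
  cs_mulA : forall x y z, G x -> G y -> G z -> mul x (mul y z) = mul (mul x y) z;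
  cs_mul1g : forall x, G x -> mul e x = x;
  cs_mulg1 : forall x, G x -> mul x e = x;
  cs_mulgV : forall x, G x -> mul x (inv x) = e;
  cs_mulVg : forall x, G x -> mul (inv x) x = e;
  cs_subG : forall x, N x -> G x;
  cs_oneN : N e;
  cs_mulN : forall x y, N x -> N y -> N (mul x y);
  cs_invN : forall x, N x -> N (inv x);
  cs_central : forall f x, N f -> G x -> mul f x = mul x f }.

Section CentralQuotient.
Variables (T : Type) (G N : pset T) (mul : T -> T -> T) (inv : T -> T) (e : T).
Hypothesis hN : central_subgroup G N mul inv e.
Let mulG := cs_mulG hN.
Let invG := cs_invG hN.
Let oneG := cs_oneG hN.
Let mulA := cs_mulA hN.
Let mul1g := cs_mul1g hN.
Let mulg1 := cs_mulg1 hN.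
Let mulgV := cs_mulgV hN.
Let mulVg := cs_mulVg hN.
Let subG := cs_subG hN.
Local Notation coset := (pcoset N mul).

Ltac inG := repeat match goal with
  | |- G (mul _ _) => apply: mulG
  | |- G (inv _) => apply: invG
  | |- G e => exact: oneG
  | H : N ?x |- G ?x => exact: subG H
  | |- G _ => assumption
  end.

Lemma inv_unique x y : G x -> G y -> mul x y = e -> inv x = y.
Proof.
move=> Gx Gy xy1.
by rewrite -[inv x]mulg1 -?xy1 ?mulA ?mulVg ?mul1g; inG.
Qed.

Lemma invK x : G x -> inv (inv x) = x.
Proof. by move=> Gx; apply: inv_unique; rewrite ?mulVg; inG. Qed.

Lemma invM x y : G x -> G y -> inv (mul x y) = mul (inv y) (inv x).
Proof.
move=> Gx Gy; apply: inv_unique; inG.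
by rewrite -mulA ?[mul y _]mulA ?mulgV ?mul1g ?mulgV; inG.
Qed.

Lemma pcoset_refl x : G x -> coset x x.
Proof. by move=> Gx; exists e; split; [apply: (cs_oneN hN) | rewrite mulg1]. Qed.

Lemma pcoset_eq x y : G x -> G y -> coset x = coset y <-> N (mul (inv x) y).
Proof.
move=> Gx Gy; split=> [exy|Nxy].
  have [f [Nf ->]] : coset x y by rewrite exy; apply: pcoset_refl.
  by rewrite mulA ?mulVg ?mul1g; inG.
have ey : y = mul x (mul (inv x) y) by rewrite mulA ?mulgV ?mul1g; inG.
apply: pset_ext => z; split=> -[f [Nf ->]].
  exists (mul (inv (mul (inv x) y)) f); split.
    by apply: (cs_mulN hN) => //; apply: (cs_invN hN).
  by rewrite mulA ?invM ?invK ?mulA ?mulgV ?mul1g; inG.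
by exists (mul (mul (inv x) y) f); split; [apply: (cs_mulN hN) | rewrite mulA -?ey; inG].
Qed.

Lemma pcoset_eq1 x : G x -> coset x = coset e <-> N x.
Proof.
move=> Gx; rewrite pcoset_eq ?mulg1; inG.
by split=> [/(cs_invN hN)|]; [rewrite invK | apply: (cs_invN hN)].
Qed.

Lemma smul_pcoset x y : G x -> G y -> smul mul (coset x) (coset y) = coset (mul x y).
Proof.
move=> Gx Gy; apply: pset_ext => z; split.
  case=> _ [_ [[f [Nf ->]] [[g [Ng ->]] ->]]].
  exists (mul f g); split; first exact: (cs_mulN hN).
  have [Gf Gg] : G f /\ G g by split; inG.
  rewrite -!mulA; inG; congr (mul x _).
  by rewrite mulA ?(cs_central hN Nf Gy) -?mulA; inG.
case=> f [Nf ->]; exists x, (mul y f); split; first exact: pcoset_refl.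
by split; [exists f | rewrite mulA]; inG.
Qed.

Lemma sinv_pcoset x : G x -> sinv inv (coset x) = coset (inv x).
Proof.
move=> Gx; apply: pset_ext => z; split.
  case=> _ [[f [Nf ->]] ->]; exists (inv f); split; first exact: (cs_invN hN).
  by rewrite invM ?(cs_central hN (cs_invN hN Nf)); inG.
case=> f [Nf ->]; exists (mul x (inv f)); split.
  by exists (inv f); split=> //; apply: (cs_invN hN).
by rewrite invM ?invK ?(cs_central hN Nf); inG.
Qed.

End CentralQuotient.

Import GroupScope.

Section AbelianProducts.
Variables (gT : finGroupType) (A : {group gT}) (I : eqType) (r : seq I) (P : pred I).
Hypothesis abA : abelian A.

Lemma prodgM_abelian (F1 F2 : I -> gT) :
    (forall i, P i -> F1 i \in A) -> (forall i, P i -> F2 i \in A) ->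
  \prod_(i <- r | P i) (F1 i * F2 i) =
    (\prod_(i <- r | P i) F1 i) * \prod_(i <- r | P i) F2 i.
Proof.
move=> AF1 AF2; apply: prodgM_commute => i j Pi Pj.
exact: (centsP abA) (AF1 i Pi) _ (AF2 j Pj).
Qed.

Lemma prodgV_abelian (F : I -> gT) : (forall i, P i -> F i \in A) ->
  \prod_(i <- r | P i) (F i)^-1 = (\prod_(i <- r | P i) F i)^-1.
Proof.
move=> AF; apply/eqP; rewrite eq_sym eq_invg_mul -prodgM_abelian ?big1 // => i Pi.
- by rewrite mulgV.
- by rewrite groupV AF.
Qed.

End AbelianProducts.

Lemma prodg_single (gT : finGroupType) (I : finType) (P : pred I) (a : I) (y : gT) :
  \prod_(i | P i) (if i == a then y else 1) = if P a then y else 1.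
Proof.
rewrite big_mkcond (eq_bigr (fun i => if i == a then (if P a then y else 1) else 1)).
  by rewrite -big_mkcond big_pred1_eq.
by move=> i _; case: eqP => [->|_]; case: ifP.
Qed.

Lemma commute_mulr_cancel (gT : finGroupType) (a z y : gT) :
  commute z y -> commute (a * z) y -> commute a y.
Proof.
move=> czy cazy; rewrite -(mulgK z a); apply: commute_sym.
by apply: commuteM; [apply: commute_sym | apply/commuteV/commute_sym].
Qed.

Lemma cyclic_pgroup_order_p_mem_cycle (gT : finGroupType) (G : {group gT}) (p : nat) w z :
  cyclic G -> p.-group G -> prime p -> w \in G -> w != 1 -> z \in G -> #[z] = p ->
  z \in <[w]>.
Proof.
move=> cycG pG p_prime Gw w_ne1 Gz oz.
have sWG : <[w]> \subset G by rewrite cycle_subG.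
have [|_ p_dvd _] := pgroup_pdiv (pgroupS sWG pG); first by rewrite cycle_eq1.
have [u Wu ou] := Cauchy p_prime p_dvd.
have sUG : <[u]> \subset G by rewrite cycle_subG (subsetP sWG).
have /eqP eqUZ : <[u]> == <[z]> :> {set gT}.
  rewrite (eq_subG_cyclic cycG sUG) ?cycle_subG //.
  by rewrite -[#|<[u]>|]/#[u] -[#|<[z]>|]/#[z] ou oz.
by rewrite -cycle_subG -eqUZ cycle_subG.
Qed.

Section Tuples.
Variables (gT : finGroupType) (E : {group gT}) (p : nat).
Local Notation tup := (tup gT p).
Local Notation one n := (@tone gT p n).

Lemma tmulA n (a b c : tup n) : tmul a (tmul b c) = tmul (tmul a b) c.
Proof. by apply/ffunP => i; rewrite !ffunE mulgA. Qed.
Lemma tmul1x n (a : tup n) : tmul (one n) a = a.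
Proof. by apply/ffunP => i; rewrite !ffunE mul1g. Qed.
Lemma tmulx1 n (a : tup n) : tmul a (one n) = a.
Proof. by apply/ffunP => i; rewrite !ffunE mulg1. Qed.
Lemma tmulV n (a : tup n) : tmul a (tinv a) = one n.
Proof. by apply/ffunP => i; rewrite !ffunE mulgV. Qed.
Lemma tmulVx n (a : tup n) : tmul (tinv a) a = one n.
Proof. by apply/ffunP => i; rewrite !ffunE mulVg. Qed.

Lemma inE_nM n (a b : tup n) : inE_n E a -> inE_n E b -> inE_n E (tmul a b).
Proof. by move=> Ea Eb i; rewrite ffunE groupM. Qed.
Lemma inE_nV n (a : tup n) : inE_n E a -> inE_n E (tinv a).
Proof. by move=> Ea i; rewrite ffunE groupV. Qed.
Lemma inE_n1 n : inE_n E (one n).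
Proof. by move=> i; rewrite ffunE group1. Qed.

Lemma inZ_nP n (t : tup n) : inZ_n E t <-> forall i, t i \in 'Z(E).
Proof.
split=> [[Et cent] i|Zt].
  apply/centerP; split=> [|y Ey]; first exact: Et.
  pose u : tup n := [ffun j => if j == i then y else 1].
  have Eu : inE_n E u by move=> j; rewrite ffunE; case: eqP.
  by have := congr1 (fun w : tup n => w i) (cent u Eu); rewrite !ffunE eqxx.
split=> [i|u Eu]; first exact: subsetP (center_sub E) _ (Zt i).
by apply/ffunP=> i; rewrite !ffunE; have /centerP[_ ->] := Zt i.
Qed.

Lemma inZ_n_Z n (t : tup n) i : inZ_n E t -> t i \in 'Z(E).
Proof. by move/inZ_nP; apply. Qed.

Lemma inZ_n_E n (t : tup n) : inZ_n E t -> inE_n E t.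
Proof. by case. Qed.

Lemma inZ_nM n (a b : tup n) : inZ_n E a -> inZ_n E b -> inZ_n E (tmul a b).
Proof. by rewrite !inZ_nP => Za Zb i; rewrite ffunE groupM. Qed.
Lemma inZ_nV n (a : tup n) : inZ_n E a -> inZ_n E (tinv a).
Proof. by rewrite !inZ_nP => Za i; rewrite ffunE groupV. Qed.
Lemma inZ_n1 n : inZ_n E (one n).
Proof. by apply/inZ_nP => i; rewrite ffunE group1. Qed.

Definition tprod n (t : tup n) : gT := \prod_(i < p ^ n) t i.

Lemma tprodM n (a b : tup n) : inZ_n E a -> inZ_n E b ->
  tprod (tmul a b) = tprod a * tprod b.
Proof.
move=> /inZ_nP Za /inZ_nP Zb; rewrite /tprod -(prodgM_abelian _ (center_abelian E)) //.
by apply: eq_bigr => i _; rewrite ffunE.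
Qed.

Lemma tprodV n (a : tup n) : inZ_n E a -> tprod (tinv a) = (tprod a)^-1.
Proof.
move=> /inZ_nP Za; rewrite /tprod -(prodgV_abelian _ (center_abelian E)) //.
by apply: eq_bigr => i _; rewrite ffunE.
Qed.

Lemma tprod_Z n (t : tup n) : inZ_n E t -> tprod t \in 'Z(E).
Proof. by move=> /inZ_nP Zt; apply: group_prod. Qed.

Lemma inF_nE n (t : tup n) : inF_n E t <-> inZ_n E t /\ tprod t = 1.
Proof. by []. Qed.

Lemma F_n_central n :
  central_subgroup (@inE_n gT E p n) (@inF_n gT E p n) (@tmul gT p n) (@tinv gT p n) (one n).
Proof.
split.
- exact: inE_nM.
- exact: inE_nV.
- exact: inE_n1.
- by move=> *; apply: tmulA.
- by move=> *; apply: tmul1x.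
- by move=> *; apply: tmulx1.
- by move=> *; apply: tmulV.
- by move=> *; apply: tmulVx.
- by move=> x [[]].
- by split; [apply: inZ_n1 | rewrite /tprod big1 // => i _; rewrite ffunE].
- move=> x y /inF_nE[Zx px] /inF_nE[Zy py]; apply/inF_nE.
  by split; [apply: inZ_nM | rewrite tprodM // px py mulg1].
- move=> x /inF_nE[Zx px]; apply/inF_nE.
  by split; [apply: inZ_nV | rewrite tprodV // px invg1].
- by move=> f x [[_ cent] _] Ex; apply: cent.
Qed.

Lemma smul_cosF n (t u : tup n) : inE_n E t -> inE_n E u ->
  smul (@tmul gT p n) (cosF E t) (cosF E u) = cosF E (tmul t u).
Proof. exact: (smul_pcoset (F_n_central n)). Qed.

Lemma sinv_cosF n (t : tup n) : inE_n E t -> sinv (@tinv gT p n) (cosF E t) = cosF E (tinv t).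
Proof. exact: (sinv_pcoset (F_n_central n)). Qed.

Lemma cosF_eq1 n (t : tup n) : inE_n E t -> cosF E t = cosF E (one n) <-> inF_n E t.
Proof. exact: (pcoset_eq1 (F_n_central n)). Qed.

Lemma cosF_refl n (t : tup n) : inE_n E t -> cosF E t t.
Proof. exact: (pcoset_refl (F_n_central n)). Qed.

Lemma tprod_cosF n (z w : tup n) : inZ_n E z -> cosF E z w -> tprod w = tprod z.
Proof. by move=> Zz [f [/inF_nE[Zf pf] ->]]; rewrite tprodM // pf mulg1. Qed.

End Tuples.

(** * Compatible sequences of representatives *)

Section Compatibility.
Variables (gT : finGroupType) (E : {group gT}) (p : nat).
Hypothesis E_class2 : nil_class E <= 2.
Local Notation cZ := (coset 'Z(E)).
Local Notation tup := (tup gT p).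
Local Notation one n := (@tone gT p n).

Lemma E_normZ x : x \in E -> x \in 'N('Z(E)).
Proof. exact: subsetP (normal_norm (center_normal E)) x. Qed.

Lemma abelian_EmodZ : abelian (E / 'Z(E)).
Proof. by apply: sub_der1_abelian; rewrite -nil_class2. Qed.

Lemma cosetZ_eq a b : a \in E -> b \in E -> a^-1 * b \in 'Z(E) <-> cZ a = cZ b.
Proof.
move=> Ea Eb; split=> [Zab|eqab].
  apply/eqP; rewrite eq_mulVg1 -morphV ?E_normZ // -morphM ?groupV ?E_normZ //.
  exact/eqP/coset_id.
apply: coset_idr; first by rewrite E_normZ // groupM ?groupV.
by rewrite morphM ?morphV ?groupV ?E_normZ //= eqab mulVg.
Qed.

Lemma cosetZM a b : a \in E -> b \in E -> cZ (a * b) = cZ a * cZ b.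
Proof. by move=> Ea Eb; apply: morphM; apply: E_normZ. Qed.

Lemma cosetZV a : a \in E -> cZ a^-1 = (cZ a)^-1.
Proof. by move=> Ea; apply: morphV; apply: E_normZ. Qed.

Definition eqmodZ n (s t : tup n) := forall i, cZ (s i) = cZ (t i).

Lemma inZ_n_eqmodZ n (s t : tup n) : inE_n E s -> inE_n E t ->
  inZ_n E (tmul (tinv s) t) <-> eqmodZ s t.
Proof.
move=> Es Et; rewrite inZ_nP; split=> st i; last by rewrite !ffunE; apply/cosetZ_eq.
by apply/cosetZ_eq => //; have := st i; rewrite !ffunE.
Qed.

Lemma psi_rep_E n (t : tup n.+1) : inE_n E t -> inE_n E (psi_rep t).
Proof. by move=> Et i; rewrite ffunE; apply: group_prod. Qed.

Lemma psi_rep_Z n (t : tup n.+1) : inZ_n E t -> inZ_n E (psi_rep t).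
Proof. by rewrite !inZ_nP => Zt i; rewrite ffunE; apply: group_prod. Qed.

Lemma cosetZ_psi_rep n (t : tup n.+1) i : inE_n E t ->
  cZ (psi_rep t i) = \prod_(r < p ^ n.+1 | r %% p ^ n == i) cZ (t r).
Proof. by move=> Et; rewrite ffunE morph_prod // => r _; apply: E_normZ. Qed.

Lemma cosetZ_psi_repM n (t u : tup n.+1) i : inE_n E t -> inE_n E u ->
  cZ (psi_rep (tmul t u) i) = cZ (psi_rep t i) * cZ (psi_rep u i).
Proof.
move=> Et Eu; rewrite !cosetZ_psi_rep //; last exact: inE_nM.
rewrite -(prodgM_abelian _ abelian_EmodZ) => [|r _|r _]; try exact: mem_quotient.
by apply: eq_bigr => r _; rewrite ffunE cosetZM.
Qed.

Lemma cosetZ_psi_repV n (t : tup n.+1) i : inE_n E t ->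
  cZ (psi_rep (tinv t) i) = (cZ (psi_rep t i))^-1.
Proof.
move=> Et; rewrite !cosetZ_psi_rep //; last exact: inE_nV.
rewrite -(prodgV_abelian _ abelian_EmodZ) => [|r _]; last exact: mem_quotient.
by apply: eq_bigr => r _; rewrite ffunE cosetZV.
Qed.

Definition cosF_seq (r : forall n, tup n) : seqT gT p := fun n => cosF E (r n).
Definition repE (r : forall n, tup n) := forall n, inE_n E (r n).
Definition repZ (r : forall n, tup n) := forall n, inZ_n E (r n).
Definition rep_compat (r : forall n, tup n) := forall n, eqmodZ (r n) (psi_rep (r n.+1)).
Definition rmul (r s : forall n, tup n) : forall n, tup n := fun n => tmul (r n) (s n).
Definition rinv (r : forall n, tup n) : forall n, tup n := fun n => tinv (r n).
Definition rone : forall n, tup n := fun n => one n.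

Lemma repEM r s : repE r -> repE s -> repE (rmul r s).
Proof. by move=> Er Es n; apply: inE_nM. Qed.
Lemma repEV r : repE r -> repE (rinv r).
Proof. by move=> Er n; apply: inE_nV. Qed.
Lemma repE1 : repE rone.
Proof. by move=> n; apply: inE_n1. Qed.
Lemma repZM r s : repZ r -> repZ s -> repZ (rmul r s).
Proof. by move=> Zr Zs n; apply: inZ_nM. Qed.
Lemma repZV r : repZ r -> repZ (rinv r).
Proof. by move=> Zr n; apply: inZ_nV. Qed.
Lemma repZ1 : repZ rone.
Proof. by move=> n; apply: inZ_n1. Qed.
Lemma repZ_E r : repZ r -> repE r.
Proof. by move=> Zr n; apply: inZ_n_E. Qed.

Lemma rep_compatZ r : repZ r -> rep_compat r.
Proof.
move=> Zr n i; rewrite !coset_id //; apply: inZ_n_Z => //.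
exact: psi_rep_Z.
Qed.

Lemma rep_compatM r s : repE r -> repE s -> rep_compat r -> rep_compat s ->
  rep_compat (rmul r s).
Proof.
by move=> Er Es cr cs n i; rewrite /rmul cosetZ_psi_repM // ffunE cosetZM ?Er ?Es // cr cs.
Qed.

Lemma rep_compatV r : repE r -> rep_compat r -> rep_compat (rinv r).
Proof. by move=> Er cr n i; rewrite /rinv cosetZ_psi_repV // ffunE cosetZV ?Er // cr. Qed.

Lemma xmul_cosF_seq r s : repE r -> repE s ->
  xmul (cosF_seq r) (cosF_seq s) = cosF_seq (rmul r s).
Proof. by move=> Er Es; apply: functional_extensionality_dep => n; apply: smul_cosF. Qed.

Lemma xinv_cosF_seq r : repE r -> xinv (cosF_seq r) = cosF_seq (rinv r).
Proof. by move=> Er; apply: functional_extensionality_dep => n; apply: sinv_cosF. Qed.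

Lemma xone_cosF_seq : @xone gT E p = cosF_seq rone.
Proof. by []. Qed.

Lemma cosF_seq_ext (r s : forall n, tup n) : (forall n, r n = s n) -> cosF_seq r = cosF_seq s.
Proof. by move=> rs; congr cosF_seq; apply: functional_extensionality_dep. Qed.

(* Compatibility does not depend on the chosen representatives, since
   [psi_rep] maps [F_(n+1)] into [Z_n]. *)
Lemma inK_cosF_seq r : repE r -> rep_compat r -> inK E (cosF_seq r).
Proof.
move=> Er cr; split=> [n|n _ _ [f [[Zf _] ->]] [f' [[Zf' _] ->]]]; first by exists (r n).
have [Ef Ef'] := (inZ_n_E Zf, inZ_n_E Zf').
apply/inZ_n_eqmodZ => [||i]; [exact: inE_nM | exact/psi_rep_E/inE_nM |].
rewrite cosetZ_psi_repM // ffunE coset_kerr; last exact: inZ_n_Z.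
rewrite (coset_id (x := psi_rep f i)) ?mulg1; first exact: cr.
by apply: inZ_n_Z; apply: psi_rep_Z.
Qed.

Lemma rep_choice (P : forall n, tup n -> Prop) :
  (forall n, exists t, P n t) -> exists r : forall n, tup n, forall n, P n (r n).
Proof.
move=> exP; exists (fun n => proj1_sig (constructive_indefinite_description _ (exP n))).
by move=> n; case: constructive_indefinite_description.
Qed.

Lemma inK_rep (x : seqT gT p) : inK E x ->
  exists r, [/\ repE r, rep_compat r & x = cosF_seq r].
Proof.
case=> /rep_choice[r rP] compat_x.
have Er : repE r by move=> n; case: (rP n).
have xr : x = cosF_seq r by apply: functional_extensionality_dep => n; case: (rP n).
exists r; split=> // n; apply/inZ_n_eqmodZ => //; first exact: psi_rep_E.
by apply: compat_x; rewrite xr; apply: cosF_refl.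
Qed.

Lemma inL_rep (x : seqT gT p) : inL E x -> exists z, repZ z /\ x = cosF_seq z.
Proof.
case/rep_choice=> z zP; exists z; split=> [n|]; first by case: (zP n).
by apply: functional_extensionality_dep => n; case: (zP n).
Qed.

Lemma inL_cosF_seq z : repZ z -> inL E (cosF_seq z).
Proof. by move=> Zz n; exists (z n). Qed.

Lemma inL_inK (x : seqT gT p) : inL E x -> inK E x.
Proof.
by case/inL_rep=> z [Zz ->]; apply: inK_cosF_seq; [apply: repZ_E | apply: rep_compatZ].
Qed.

End Compatibility.

Arguments cosF_seq [gT] E [p] r n _.

(** * The quotient [H = K / D] and its subgroup [Z = L / D] *)

Section QuotientH.
Variables (gT : finGroupType) (E : {group gT}) (p : nat) (U : pset (pset nat)).
Hypothesis E_class2 : nil_class E <= 2.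
Hypothesis U_ultra : is_ultrafilter U.
Local Notation tup := (tup gT p).
Local Notation one n := (@tone gT p n).
Local Notation cs := (cosF_seq E).

Lemma inD_cosF_seq (z : forall n, tup n) : repZ E z ->
  inD E U (cs z) <-> ~ U (fun n => ~ inF_n E (z n)).
Proof.
move=> Zz; rewrite /inD.
have -> : (fun n : nat => cs z n <> cosF E (one n)) = (fun n => ~ inF_n E (z n)).
  by apply: (@pset_ext nat) => n; rewrite /cosF_seq (cosF_eq1 (inZ_n_E (Zz n))).
by split=> [[]//|nU]; split=> //; apply: inL_cosF_seq.
Qed.

Lemma inD_rep (x : seqT gT p) : inD E U x ->
  exists z, [/\ repZ E z, x = cs z & ~ U (fun n => ~ inF_n E (z n))].
Proof.
move=> Dx; have [z [Zz xz]] := inL_rep Dx.1.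
by exists z; split=> //; apply/inD_cosF_seq => //; rewrite -xz.
Qed.

Lemma inDM (x y : seqT gT p) : inD E U x -> inD E U y -> inD E U (xmul x y).
Proof.
move=> /inD_rep[z [Zz -> nUz]] /inD_rep[w [Zw -> nUw]].
rewrite (xmul_cosF_seq (repZ_E Zz) (repZ_E Zw)); apply/inD_cosF_seq; first exact: repZM.
move=> Uzw; have : U (fun n => ~ inF_n E (z n) \/ ~ inF_n E (w n)).
  apply: (uf_sub U_ultra Uzw) => n nFzw; apply: NNPP => /not_or_and[/NNPP Fz /NNPP Fw].
  exact/nFzw/(cs_mulN (F_n_central E p n)).
by case/(uf_or U_ultra).
Qed.

Lemma inDV (x : seqT gT p) : inD E U x -> inD E U (xinv x).
Proof.
move=> /inD_rep[z [Zz -> nUz]].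
rewrite (xinv_cosF_seq (repZ_E Zz)); apply/inD_cosF_seq; first exact: repZV.
move=> Uz; apply/nUz/(uf_sub U_ultra Uz) => n nFz Fz.
exact/nFz/(cs_invN (F_n_central E p n)).
Qed.

Lemma D_central :
  central_subgroup (@inK gT E p) (@inD gT E p U) (@xmul gT p) (@xinv gT p) (@xone gT E p).
Proof.
split.
- move=> _ _ /inK_rep[r [Er cr ->]] /inK_rep[s [Es cs' ->]].
  rewrite xmul_cosF_seq //; apply: (inK_cosF_seq E_class2); first exact: repEM.
  exact: (rep_compatM E_class2).
- move=> _ /inK_rep[r [Er cr ->]].
  rewrite xinv_cosF_seq //; apply: (inK_cosF_seq E_class2); first exact: repEV.
  exact: (rep_compatV E_class2).
- by apply: (inL_inK E_class2); apply: inL_cosF_seq; apply: repZ1.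
- move=> _ _ _ /inK_rep[r [Er _ ->]] /inK_rep[s [Es _ ->]] /inK_rep[u [Eu _ ->]].
  rewrite (xmul_cosF_seq Es Eu) (xmul_cosF_seq Er Es).
  rewrite (xmul_cosF_seq Er (repEM Es Eu)) (xmul_cosF_seq (repEM Er Es) Eu).
  by apply: cosF_seq_ext => n; apply: tmulA.
- move=> _ /inK_rep[r [Er _ ->]]; rewrite xone_cosF_seq (xmul_cosF_seq (@repE1 _ E p) Er).
  by apply: cosF_seq_ext => n; apply: tmul1x.
- move=> _ /inK_rep[r [Er _ ->]]; rewrite xone_cosF_seq (xmul_cosF_seq Er (@repE1 _ E p)).
  by apply: cosF_seq_ext => n; apply: tmulx1.
- move=> _ /inK_rep[r [Er _ ->]]; rewrite xone_cosF_seq (xinv_cosF_seq Er).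
  rewrite (xmul_cosF_seq Er (repEV Er)).
  by apply: cosF_seq_ext => n; apply: tmulV.
- move=> _ /inK_rep[r [Er _ ->]]; rewrite xone_cosF_seq (xinv_cosF_seq Er).
  rewrite (xmul_cosF_seq (repEV Er) Er).
  by apply: cosF_seq_ext => n; apply: tmulVx.
- by move=> x [Lx _]; apply: (inL_inK E_class2).
- rewrite xone_cosF_seq; apply/inD_cosF_seq; first exact: repZ1.
  by case/(uf_ex U_ultra)=> n; apply; apply: (cs_oneN (F_n_central E p n)).
- exact: inDM.
- exact: inDV.
- move=> _ _ /inD_rep[z [Zz -> _]] /inK_rep[r [Er _ ->]].
  rewrite (xmul_cosF_seq (repZ_E Zz) Er) (xmul_cosF_seq Er (repZ_E Zz)).
  by apply: cosF_seq_ext => n; apply: (Zz n).2.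
Qed.

Lemma Hmul_cosD (x y : seqT gT p) : inK E x -> inK E y ->
  Hmul (cosD E U x) (cosD E U y) = cosD E U (xmul x y).
Proof. exact: (smul_pcoset D_central). Qed.

Lemma Hinv_cosD (x : seqT gT p) : inK E x -> Hinv (cosD E U x) = cosD E U (xinv x).
Proof. exact: (sinv_pcoset D_central). Qed.

Lemma cosD_eq (x y : seqT gT p) : inK E x -> inK E y ->
  cosD E U x = cosD E U y <-> inD E U (xmul (xinv x) y).
Proof. exact: (pcoset_eq D_central). Qed.

Lemma cosD_eq1 (x : seqT gT p) : inK E x -> cosD E U x = Hone E U <-> inD E U x.
Proof. exact: (pcoset_eq1 D_central). Qed.

Lemma cosD_refl (x : seqT gT p) : inK E x -> cosD E U x x.
Proof. exact: (pcoset_refl D_central). Qed.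

End QuotientH.

Section CenterIsomorphism.
Variables (gT : finGroupType) (E : {group gT}) (p : nat) (U : pset (pset nat)).
Hypothesis E_class2 : nil_class E <= 2.
Hypothesis U_ultra : is_ultrafilter U.
Hypothesis p_gt0 : 0 < p.
Local Notation tup := (tup gT p).
Local Notation one n := (@tone gT p n).
Local Notation cs := (cosF_seq E).
Local Notation cosD := (cosD E U).

Definition coset_prod n (k : pset (tup n)) : gT := tprod (epsilon (inhabits (one n)) k).

Definition ulim (g : nat -> gT) : gT :=
  epsilon (inhabits 1) (fun v => U (fun n => g n = v)).

Definition Zval (C : pset (seqT gT p)) : gT :=
  ulim (fun n => coset_prod (epsilon (inhabits (@xone gT E p)) C n)).

Lemma ulimP g : U (fun n => g n = ulim g).
Proof. exact: epsilon_spec (uf_const U_ultra g). Qed.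

Lemma coset_prod_cosF n (z : tup n) : inZ_n E z -> coset_prod (cosF E z) = tprod z.
Proof.
move=> Zz; apply: (tprod_cosF Zz); apply: epsilon_spec.
by exists z; apply: cosF_refl; apply: inZ_n_E.
Qed.

(* The representative picked by [epsilon] differs from [z] by an element of
   [D], whose coordinate products are trivial on a U-large set. *)
Lemma Zval_cosF_seq z : repZ E z -> U (fun n => tprod (z n) = Zval (cosD (cs z))).
Proof.
move=> Zz; rewrite /Zval; set y := epsilon _ (cosD (cs z)).
have [d [/inD_rep[w [Zw -> nUw]] ye]] : cosD (cs z) y.
  apply: epsilon_spec; exists (cs z).
  by apply: (cosD_refl E_class2 U_ultra); apply: (inL_inK E_class2); apply: inL_cosF_seq.
have UFw : U (fun n => inF_n E (w n)).
  by case: (uf_or_not U_ultra (fun n => inF_n E (w n))) => // /nUw.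
have Uy := ulimP (fun n => coset_prod (y n)).
apply: (uf_sub U_ultra (uf_and U_ultra UFw Uy)) => n [/inF_nE[_ pw] <-].
rewrite ye (xmul_cosF_seq (repZ_E Zz) (repZ_E Zw)) coset_prod_cosF; last exact: inZ_nM.
by rewrite (tprodM (Zz n) (Zw n)) pw mulg1.
Qed.

Lemma Zval_eq z v : repZ E z -> U (fun n => tprod (z n) = v) -> Zval (cosD (cs z)) = v.
Proof.
move=> Zz Uv; apply: (uf_const_unique U_ultra (Zval_cosF_seq Zz) Uv).
Qed.

Lemma Zval_Z C : Zcar E U C -> Zval C \in 'Z(E).
Proof.
case=> _ [/inL_rep[z [Zz ->]] ->]; have [n <-] := uf_ex U_ultra (Zval_cosF_seq Zz).
exact: tprod_Z.
Qed.

Lemma Zval_inj C1 C2 : Zcar E U C1 -> Zcar E U C2 -> Zval C1 = Zval C2 -> C1 = C2.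
Proof.
case=> _ [/inL_rep[z [Zz ->]] ->] [_ [/inL_rep[w [Zw ->]] ->]] zw.
have [Kz Kw] := (inL_inK E_class2 (inL_cosF_seq Zz), inL_inK E_class2 (inL_cosF_seq Zw)).
apply/(cosD_eq E_class2 U_ultra Kz Kw).
rewrite (xinv_cosF_seq (repZ_E Zz)) (xmul_cosF_seq (repZ_E (repZV Zz)) (repZ_E Zw)).
apply/inD_cosF_seq; first by apply: repZM; [apply: repZV |].
move=> UnF; have [n [nF [pz pw]]] :=
  uf_ex U_ultra (uf_and U_ultra UnF (uf_and U_ultra (Zval_cosF_seq Zz) (Zval_cosF_seq Zw))).
apply/nF/inF_nE; split; first by apply: inZ_nM; [apply: inZ_nV |].
by rewrite (tprodM (inZ_nV (Zz n)) (Zw n)) (tprodV (Zz n)) pz pw zw mulVg.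
Qed.

Lemma pexpn_gt0 n : 0 < p ^ n.
Proof. by rewrite expn_gt0 p_gt0. Qed.

Definition single n (b : gT) : tup n :=
  [ffun i => if i == Ordinal (pexpn_gt0 n) then b else 1].

Lemma tprod_single n b : tprod (single n b) = b.
Proof.
rewrite /tprod (eq_bigr (fun i => if i == Ordinal (pexpn_gt0 n) then b else 1)).
  by rewrite prodg_single.
by move=> i _; rewrite ffunE.
Qed.

Lemma Zval_onto b : b \in 'Z(E) -> exists C, Zcar E U C /\ Zval C = b.
Proof.
move=> Zb; have Zsingle : repZ E (fun n => single n b).
  by move=> n; apply/inZ_nP => i; rewrite ffunE; case: eqP.
exists (cosD (cs (fun n => single n b))); split.
  by exists (cs (fun n => single n b)); split=> //; apply: inL_cosF_seq.
apply: Zval_eq => //; apply: (uf_sub U_ultra (uf_True U_ultra)) => n _.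
exact: tprod_single.
Qed.

Lemma Zval_mul C1 C2 : Zcar E U C1 -> Zcar E U C2 -> Zval (Hmul C1 C2) = Zval C1 * Zval C2.
Proof.
case=> _ [/inL_rep[z [Zz ->]] ->] [_ [/inL_rep[w [Zw ->]] ->]].
have [Kz Kw] := (inL_inK E_class2 (inL_cosF_seq Zz), inL_inK E_class2 (inL_cosF_seq Zw)).
rewrite (Hmul_cosD E_class2 U_ultra Kz Kw) (xmul_cosF_seq (repZ_E Zz) (repZ_E Zw)).
apply: Zval_eq; first exact: repZM.
apply: (uf_sub U_ultra (uf_and U_ultra (Zval_cosF_seq Zz) (Zval_cosF_seq Zw))) => n [pz pw].
by rewrite (tprodM (Zz n) (Zw n)) pz pw.
Qed.

Lemma Zcar_isomorphic : isomorphic_to_fin (Zcar E U) (@Hmul gT p) 'Z(E).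
Proof.
by exists Zval; split; [apply: Zval_Z | apply: Zval_inj | apply: Zval_onto | apply: Zval_mul].
Qed.

End CenterIsomorphism.

(** * The centre of [H] and monolithicity *)

Section CenterOfH.
Variables (gT : finGroupType) (E : {group gT}) (p : nat) (U : pset (pset nat)).
Hypothesis E_class2 : nil_class E <= 2.
Hypothesis U_ultra : is_ultrafilter U.
Hypothesis U_nonprincipal : nonprincipal U.
Hypothesis p_gt0 : 0 < p.
Local Notation tup := (tup gT p).
Local Notation cZ := (coset 'Z(E)).
Local Notation cs := (cosF_seq E).
Local Notation cosD := (cosD E U).

Definition tcomm n (s t : tup n) : tup n := tmul (tinv (tmul s t)) (tmul t s).

Lemma commgZ a b : a \in E -> b \in E -> (a * b)^-1 * (b * a) \in 'Z(E).
Proof.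
move=> Ea Eb; have -> : (a * b)^-1 * (b * a) = [~ b, a] by rewrite /commg /conjg invMg !mulgA.
by apply: subsetP (mem_commg Eb Ea); rewrite -derg1 -nil_class2.
Qed.

Lemma tcommZ n (s t : tup n) : inE_n E s -> inE_n E t -> inZ_n E (tcomm s t).
Proof. by move=> Es Et; apply/inZ_nP => i; rewrite !ffunE commgZ. Qed.

Section NoncentralPath.
Variables (r : forall n, tup n) (Er : repE E r) (cr : rep_compat E r) (n0 : nat).
Hypothesis r_noncentral : ~ inZ_n E (r n0).

(* A noncentral coordinate of [r n0], then, level by level, a noncentral
   coordinate of [r m.+1] lying over the chosen one of [r m]. *)
Definition start : nat :=
  if [pick i : 'I_(p ^ n0) | r n0 i \notin 'Z(E)] is Some i then val i else 0.
Definition step m (i : nat) : nat :=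
  if [pick q : 'I_(p ^ m.+1) | (q %% p ^ m == i) && (r m.+1 q \notin 'Z(E))] is Some q
  then val q else 0.
Fixpoint ncidx m : nat :=
  if m is m'.+1 then (if m <= n0 then start %% p ^ m else step m' (ncidx m')) else 0.

Lemma ncidx_le m : m <= n0 -> ncidx m = start %% p ^ m.
Proof. by case: m => [_|m /= ->] //; rewrite expn0 modn1. Qed.

Lemma ncidx_gt m : n0 <= m -> ncidx m.+1 = step m (ncidx m).
Proof. by move=> n0m /=; rewrite leqNgt ltnS n0m. Qed.

Lemma startP : start < p ^ n0 /\ forall i : 'I_(p ^ n0), val i = start -> r n0 i \notin 'Z(E).
Proof.
have [i0 ri0] : exists i, r n0 i \notin 'Z(E).
  apply: NNPP => allZ; apply: r_noncentral; apply/inZ_nP => i.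
  by apply/negbNE/negP => nZ; apply: allZ; exists i.
rewrite /start; case: pickP => [i ri | /(_ i0)]; last by rewrite ri0.
by split=> [|i' /val_inj ->]; first exact: ltn_ord.
Qed.

(* [step] always succeeds: if all coordinates over [i] were central, so would
   be their product, which is [r m i] modulo [Z(E)] by compatibility. *)
Lemma stepP m (i : 'I_(p ^ m)) : r m i \notin 'Z(E) ->
  [/\ step m i < p ^ m.+1, step m i %% p ^ m = i &
      forall q : 'I_(p ^ m.+1), val q = step m i -> r m.+1 q \notin 'Z(E)].
Proof.
move=> nZ; rewrite /step; case: pickP => [q /andP[/eqP qi nZq] | none].
  by split=> [|//|q' /val_inj ->]; first exact: ltn_ord.
case/negP: nZ; apply: coset_idr; first exact/E_normZ/Er.
rewrite (@cr m i) cosetZ_psi_rep //; apply: big1 => q qi; apply: coset_id.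
by have := none q; rewrite qi /= => /negbFE.
Qed.

Lemma ncidxP m : n0 <= m ->
  ncidx m < p ^ m /\ forall i : 'I_(p ^ m), val i = ncidx m -> r m i \notin 'Z(E).
Proof.
move=> n0m; rewrite -(subnKC n0m); elim: (m - n0) => [|k [lt_k nZk]].
  by rewrite addn0 ncidx_le // modn_small; case: startP.
rewrite addnS ncidx_gt ?leq_addr //.
by have [? _ ?] := stepP (nZk (Ordinal lt_k) erefl).
Qed.

Lemma ncidx_lt m : ncidx m < p ^ m.
Proof.
case: (leqP m n0) => [le_m|/ltnW/ncidxP[] //].
by rewrite ncidx_le // ltn_pmod // expn_gt0 p_gt0.
Qed.

Lemma ncidx_mod m : ncidx m.+1 %% p ^ m = ncidx m.
Proof.
case: (leqP m.+1 n0) => [le_m|lt_m].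
  by rewrite !ncidx_le ?(ltnW le_m) // modn_dvdm // dvdn_exp2l.
have [lt_m' nZ] := ncidxP lt_m.
by rewrite ncidx_gt //; case: (stepP (nZ (Ordinal lt_m') erefl)).
Qed.

Definition ncord m : 'I_(p ^ m) := Ordinal (ncidx_lt m).
Definition ncoord m : gT := r m (ncord m).

Lemma ncoord_noncentral m : n0 <= m -> ncoord m \notin 'Z(E).
Proof. by move=> n0m; have [_] := ncidxP n0m; apply. Qed.

Definition spike (y : gT) m : tup m := [ffun i => if i == ncord m then y else 1].

Lemma spike_E y : y \in E -> repE E (spike y).
Proof. by move=> Ey m i; rewrite ffunE; case: eqP. Qed.

Lemma psi_rep_spike y m : psi_rep (spike y m.+1) = spike y m.
Proof.
apply/ffunP => i; rewrite !ffunE (eq_bigr (fun q => if q == ncord m.+1 then y else 1)).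
  by rewrite prodg_single /= ncidx_mod eq_sym.
by move=> q _; rewrite ffunE.
Qed.

Lemma spike_compat y : rep_compat E (spike y).
Proof. by move=> m i; rewrite psi_rep_spike. Qed.

Lemma tcomm_spike_F y m : y \in E -> inF_n E (tcomm (r m) (spike y m)) ->
  commute (ncoord m) y.
Proof.
move=> Ey /inF_nE[_]; set t := tcomm _ _.
rewrite /tprod (eq_bigr (fun i => if i == ncord m then t (ncord m) else 1)).
  by rewrite prodg_single !ffunE eqxx => /eqP; rewrite -eq_mulVg1 => /eqP.
by move=> i _; case: eqP => [->|/eqP/negbTE ni] //; rewrite !ffunE ni mulg1 mul1g mulVg.
Qed.

(* A spike at an element [y] not commuting with the U-limit class of
   [ncoord m] modulo [Z(E)] fails to commute with [r] on a U-large set. *)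
Lemma noncentral_witness : exists y, y \in E /\
  U (fun m => ~ inF_n E (tcomm (r m) (spike y m))).
Proof.
have [c Uc] := uf_const U_ultra (fun m => cZ (ncoord m)).
have [m1 [cm1 n0m1]] := uf_ex U_ultra (uf_and U_ultra Uc (uf_ge U_ultra U_nonprincipal n0)).
have [y [Ey ncy]] : exists y, y \in E /\ ~ commute (ncoord m1) y.
  apply: NNPP => allc; case/negP: (ncoord_noncentral n0m1); apply/centerP.
  by split=> [|z Ez]; [apply: Er | apply: NNPP => nc; apply: allc; exists z].
exists y; split=> //; apply: (uf_sub U_ultra Uc) => m cm /(tcomm_spike_F Ey) cmy.
have Zm : (ncoord m1)^-1 * ncoord m \in 'Z(E).
  by apply/cosetZ_eq; [apply: Er | apply: Er | rewrite cm cm1].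
apply/ncy/(commute_mulr_cancel (z := (ncoord m1)^-1 * ncoord m)).
  by case/centerP: Zm => _; apply.
by rewrite mulKVg.
Qed.

End NoncentralPath.

Lemma Hcar_rep (C : pset (seqT gT p)) : Hcar E U C ->
  exists r, [/\ repE E r, rep_compat E r & C = cosD (cs r)].
Proof. by case=> _ [/inK_rep[r [Er cr ->]] ->]; exists r. Qed.

Lemma Zcar_rep (C : pset (seqT gT p)) : Zcar E U C -> exists z, repZ E z /\ C = cosD (cs z).
Proof. by case=> _ [/inL_rep[z [Zz ->]] ->]; exists z. Qed.

Lemma Zcar_sub_Hcar (C : pset (seqT gT p)) : Zcar E U C -> Hcar E U C.
Proof. by case=> x [Lx ->]; exists x; split=> //; apply: inL_inK. Qed.

Lemma Hmul_cosF_seq (r s : forall n, tup n) :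
    repE E r -> rep_compat E r -> repE E s -> rep_compat E s ->
  Hmul (cosD (cs r)) (cosD (cs s)) = cosD (cs (rmul r s)).
Proof.
move=> Er cr Es cs'.
rewrite (Hmul_cosD E_class2 U_ultra (inK_cosF_seq E_class2 Er cr) (inK_cosF_seq E_class2 Es cs')).
by rewrite (xmul_cosF_seq Er Es).
Qed.

Lemma Hinv_cosF_seq (r : forall n, tup n) : repE E r -> rep_compat E r ->
  Hinv (cosD (cs r)) = cosD (cs (rinv r)).
Proof.
move=> Er cr; rewrite (Hinv_cosD E_class2 U_ultra (inK_cosF_seq E_class2 Er cr)).
by rewrite (xinv_cosF_seq Er).
Qed.

Lemma cosD_cosF_seq_eq (r s : forall n, tup n) :
    repE E r -> rep_compat E r -> repE E s -> rep_compat E s ->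
  cosD (cs r) = cosD (cs s) <-> inD E U (cs (rmul (rinv r) s)).
Proof.
move=> Er cr Es cs'.
rewrite (cosD_eq E_class2 U_ultra (inK_cosF_seq E_class2 Er cr) (inK_cosF_seq E_class2 Es cs')).
by rewrite (xinv_cosF_seq Er) (xmul_cosF_seq (repEV Er) Es).
Qed.

Lemma Zcar_central (C g : pset (seqT gT p)) :
  Zcar E U C -> Hcar E U g -> Hmul C g = Hmul g C.
Proof.
move=> /Zcar_rep[z [Zz ->]] /Hcar_rep[s [Es cs' ->]].
have [Ez cz] := (repZ_E Zz, rep_compatZ Zz).
rewrite !Hmul_cosF_seq //; congr cosD; apply: cosF_seq_ext => n.
exact: (Zz n).2.
Qed.

Lemma Hcenter_sub_Zcar (C : pset (seqT gT p)) :
    Hcar E U C -> (forall g, Hcar E U g -> Hmul C g = Hmul g C) ->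
  Zcar E U C.
Proof.
move=> /Hcar_rep[r [Er cr ->]] central_C.
case: (classic (repZ E r)) => [Zr | /not_all_ex_not[n0 r_noncentral]].
  by exists (cs r); split=> //; apply: inL_cosF_seq.
have [y [Ey Ucomm]] := noncentral_witness Er cr r_noncentral.
pose s := spike Er cr r_noncentral y.
have [Es cs'] : repE E s /\ rep_compat E s by split; [apply: spike_E | apply: spike_compat].
have Zcomm : repZ E (fun n => tcomm (r n) (s n)) by move=> n; apply: tcommZ.
move: (central_C _ (ex_intro _ _ (conj (inK_cosF_seq E_class2 Es cs') erefl))).
rewrite !Hmul_cosF_seq // (cosD_cosF_seq_eq (repEM Er Es) (rep_compatM E_class2 Er Es cr cs')
  (repEM Es Er) (rep_compatM E_class2 Es Er cs' cr)).
by move/(inD_cosF_seq U Zcomm).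
Qed.

Lemma Hcenter_eq : gcenter (Hcar E U) (@Hmul gT p) = Zcar E U.
Proof.
apply: pset_ext => C; split=> [[HC central_C]|ZC]; first exact: Hcenter_sub_Zcar.
by split=> [|g Hg]; [apply: Zcar_sub_Hcar | apply: Zcar_central].
Qed.

Lemma Hcommutator_Zcar (x g : pset (seqT gT p)) :
  Hcar E U x -> Hcar E U g -> Hmul x g <> Hmul g x ->
  let c := Hmul (Hinv x) (Hmul (Hmul (Hinv g) x) g) in Zcar E U c /\ c <> Hone E U.
Proof.
move=> /Hcar_rep[r [Er cr ->]] /Hcar_rep[s [Es cs' ->]] ncomm c.
have [Eri cri] := (repEV Er, rep_compatV E_class2 Er cr).
have [Esi csi] := (repEV Es, rep_compatV E_class2 Es cs').
have [Esir csir] := (repEM Esi Er, rep_compatM E_class2 Esi Er csi cr).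
have [Esirs csirs] := (repEM Esir Es, rep_compatM E_class2 Esir Es csir cs').
have Zsr : repZ E (fun n => tcomm (s n) (r n)) by move=> n; apply: tcommZ.
have Zrs : repZ E (fun n => tcomm (r n) (s n)) by move=> n; apply: tcommZ.
have -> : c = cosD (cs (fun n => tcomm (s n) (r n))).
  rewrite /c !Hinv_cosF_seq // !Hmul_cosF_seq //; congr cosD; apply: cosF_seq_ext => n.
  by apply/ffunP => i; rewrite !ffunE invMg !mulgA.
split; first by exists (cs (fun n => tcomm (s n) (r n))); split=> //; apply: inL_cosF_seq.
have Ksr := inL_inK E_class2 (inL_cosF_seq Zsr).
move/(cosD_eq1 E_class2 U_ultra Ksr)/(inD_cosF_seq U Zsr) => nUsr; apply: ncomm.
rewrite !Hmul_cosF_seq // cosD_cosF_seq_eq; try exact: repEM; try exact: rep_compatM.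
apply/(inD_cosF_seq U Zrs) => Urs; apply/nUsr/(uf_sub U_ultra Urs) => n nFrs Fsr.
apply: nFrs; change (inF_n E (tcomm (r n) (s n))).
have -> : tcomm (r n) (s n) = tinv (tcomm (s n) (r n)).
  by apply/ffunP => i; rewrite !ffunE !invMg !invgK.
exact: (cs_invN (F_n_central E p n)).
Qed.

Lemma normal_meets_Zcar (N : pset (pset (seqT gT p))) :
    is_normal_subgroup (Hcar E U) (@Hmul gT p) (@Hinv gT p) (Hone E U) N ->
    nontrivial_sub (Hone E U) N ->
  exists c, [/\ N c, Zcar E U c & c <> Hone E U].
Proof.
move=> [[NH _ NM NV] Nconj] [x [Nx x_ne1]].
case: (classic (Zcar E U x)) => [Zx|nZx]; first by exists x.
have [g [Hg ncomm]] : exists g, Hcar E U g /\ Hmul x g <> Hmul g x.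
  apply: NNPP => allc; apply/nZx/(Hcenter_sub_Zcar (NH x Nx)) => g Hg.
  by apply: NNPP => nc; apply: allc; exists g.
have [Zc c_ne1] := Hcommutator_Zcar (NH x Nx) Hg ncomm.
exists (Hmul (Hinv x) (Hmul (Hmul (Hinv g) x) g)); split=> //.
by apply: NM; [apply: NV | apply: Nconj].
Qed.

Lemma Zval_Hone : Zval E U (@Hone gT E p U) = 1.
Proof.
rewrite /Hone xone_cosF_seq; apply: (Zval_eq E_class2 U_ultra (repZ1 E p)).
apply: (uf_sub U_ultra (uf_True U_ultra)) => n _.
by rewrite /tprod big1 // => i _; rewrite ffunE.
Qed.

Lemma Hone_Zcar : Zcar E U (@Hone gT E p U).
Proof. by exists (@xone gT E p); split=> //; apply: inL_cosF_seq; apply: repZ1. Qed.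

Lemma Zcar_mul (C1 C2 : pset (seqT gT p)) :
  Zcar E U C1 -> Zcar E U C2 -> Zcar E U (Hmul C1 C2).
Proof.
move=> /Zcar_rep[z [Zz ->]] /Zcar_rep[w [Zw ->]].
rewrite Hmul_cosF_seq; try exact: repZ_E; try exact: rep_compatZ.
by exists (cs (rmul z w)); split=> //; apply/inL_cosF_seq/repZM.
Qed.

Lemma Zcar_iter_mul (c : pset (seqT gT p)) k : Zcar E U c ->
  Zcar E U (iter k (Hmul c) (Hone E U)) /\
  Zval E U (iter k (Hmul c) (Hone E U)) = Zval E U c ^+ k.
Proof.
move=> Zc; elim: k => [|k [Zck eck]].
  by rewrite Zval_Hone; split=> //; apply: Hone_Zcar.
rewrite iterS; split; first exact: Zcar_mul.
by rewrite (Zval_mul E_class2 U_ultra) // eck expgS.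
Qed.

Lemma subgroup_Zcar_order_p (N : pset (pset (seqT gT p))) c h :
    prime p -> p.-group 'Z(E) -> cyclic 'Z(E) ->
    is_subgroup (Hcar E U) (@Hmul gT p) (@Hinv gT p) (Hone E U) N ->
    N c -> Zcar E U c -> c <> Hone E U -> Zcar E U h -> #[Zval E U h] = p ->
  N h.
Proof.
move=> p_prime pZ cycZ [_ N1 NM _] Nc Zc c_ne1 Zh oh.
have c1 : Zval E U c != 1.
  apply/eqP => Zc1; apply/c_ne1/(Zval_inj E_class2 U_ultra Zc Hone_Zcar).
  by rewrite Zc1 Zval_Hone.
have [k hk] := cycleP _ _ (cyclic_pgroup_order_p_mem_cycle cycZ pZ p_prime
  (Zval_Z E_class2 U_ultra Zc) c1 (Zval_Z E_class2 U_ultra Zh) oh).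
have [Zck ck] := Zcar_iter_mul k Zc.
rewrite -(Zval_inj E_class2 U_ultra Zck Zh) ?ck //.
by elim: k {hk Zck ck} => //= k Nck; apply: NM.
Qed.

Lemma H_monolithic : prime p -> p.-group 'Z(E) -> cyclic 'Z(E) -> 'Z(E) != 1 ->
  monolithic (Hcar E U) (@Hmul gT p) (@Hinv gT p) (Hone E U).
Proof.
move=> p_prime pZ cycZ ntZ.
have [_ p_dvd _] := pgroup_pdiv pZ ntZ.
have [z Zz oz] := Cauchy p_prime p_dvd.
have [h [Zh hz]] := Zval_onto E_class2 U_ultra p_gt0 Zz.
exists h; split; first exact: Zcar_sub_Hcar.
  move=> h1; move: oz; rewrite -hz h1 Zval_Hone order1 => p1.
  by rewrite -p1 in p_prime.
move=> N normalN /(normal_meets_Zcar normalN)[c [Nc Zc c_ne1]].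
by apply: (subgroup_Zcar_order_p p_prime pZ cycZ normalN.1 Nc Zc c_ne1 Zh); rewrite hz.
Qed.

End CenterOfH.

Theorem theorem4p4 (gT : finGroupType) (E : {group gT}) (p : nat)
  (U : pset (pset nat)) :
  prime p -> (p.-group E)%g -> ~~ abelian E -> nil_class E = 2 ->
  cyclic ('Z(E))%g ->
  is_ultrafilter U -> nonprincipal U ->
  [/\ isomorphic_to_fin (@Zcar gT E p U) (@Hmul gT p) ('Z(E))%g,
      monolithic (@Hcar gT E p U) (@Hmul gT p) (@Hinv gT p) (@Hone gT E p U) &
      gcenter (@Hcar gT E p U) (@Hmul gT p) = @Zcar gT E p U].
Proof.
move=> p_prime pE nabE classE cycZ U_ultra U_nonprincipal.
have E_class2 : nil_class E <= 2 by rewrite classE.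
have p_gt0 := prime_gt0 p_prime.
have ntZ : 'Z(E) != 1.
  by rewrite center_nil_eq1 ?(pgroup_nil pE) //; apply: contraNneq nabE => ->; apply: abelian1.
split.
- exact: Zcar_isomorphic.
- exact: H_monolithic (pgroupS (center_sub E) pE) cycZ ntZ.
- exact: Hcenter_eq.
Qed.
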